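(* Let $A\in(0,1)$, $M<0$, $Q>0$, $S>0$ and consider the planar system $$\frac{du}{d\tau}=u^2\big((u+A)(1-u)(u-M)-Qv\big),\qquad \frac{dv}{d\tau}=S(u+A)(u-v)v .$$ Put $T=1-A+M$. (a) If $T^3<-27AM$, then no positive equilibrium $(\tilde u,\tilde u)$, $\tilde u>0$, of the system is a saddle. (b) If a positive equilibrium $(\tilde u,\tilde u)$ satisfies $\tilde u>T+\sqrt{T^2+3(A-M+AM)}$, then it is not a repeller.
   Context: The positive equilibria of the system are exactly the points $(u,u)$ with $u>0$ and $(u+A)(1-u)(u-M)=Qu$. *)

From Stdlib Require Import Reals.
From Coquelicot Require Import Coquelicot.
Open Scope R_scope.

Definition field_u (A M Q : R) (u v : R) : R :=
  u ^ 2 * ((u + A) * (1 - u) * (u - M) - Q * v).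
Definition field_v (A S : R) (u v : R) : R :=
  S * (u + A) * (u - v) * v.

Definition equilibrium (A M Q S u v : R) : Prop :=
  field_u A M Q u v = 0 /\ field_v A S u v = 0.

Definition jac11 (A M Q S u v : R) : R := Derive (fun x => field_u A M Q x v) u.
Definition jac12 (A M Q S u v : R) : R := Derive (fun y => field_u A M Q u y) v.
Definition jac21 (A M Q S u v : R) : R := Derive (fun x => field_v A S x v) u.
Definition jac22 (A M Q S u v : R) : R := Derive (fun y => field_v A S u y) v.

Definition jac_eigenvalue (A M Q S u v : R) (z : C) : Prop :=
  Cminus (Cmult (Cminus (RtoC (jac11 A M Q S u v)) z)
                (Cminus (RtoC (jac22 A M Q S u v)) z))
         (Cmult (RtoC (jac12 A M Q S u v)) (RtoC (jac21 A M Q S u v))) = RtoC 0.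

Definition is_saddle (A M Q S u v : R) : Prop :=
  equilibrium A M Q S u v /\
  exists l1 l2 : R, l1 < 0 < l2 /\
    jac_eigenvalue A M Q S u v (RtoC l1) /\ jac_eigenvalue A M Q S u v (RtoC l2).

Definition is_repeller (A M Q S u v : R) : Prop :=
  equilibrium A M Q S u v /\
  forall z : C, jac_eigenvalue A M Q S u v z -> 0 < Re z.

(* At a positive equilibrium (u,u) the equilibrium equation Q u = f(u), with
   f(u) = (u+A)(1-u)(u-M) = -u^3 + T u^2 + (A-M+AM) u - AM, eliminates Q from
   the Jacobian: its determinant is S u^2 (u+A) (f(u) - u f'(u)) =
   S u^2 (u+A) (2u^3 - T u^2 - AM) and its trace is u^2 f'(u) - S u (u+A).
   Under T^3 < -27AM the cubic 2u^3 - T u^2 - AM is positive for u > 0, so the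
   determinant is positive and the eigenvalues cannot be real of opposite
   signs.  Beyond T + sqrt(T^2 + 3(A-M+AM)) the quadratic f' is negative, so
   the trace is negative and some eigenvalue has negative real part. *)
From Stdlib Require Import Reals Lra Psatz.
From Coquelicot Require Import Coquelicot.
Open Scope R_scope.

Definition jac_det (A M Q S u v : R) : R :=
  jac11 A M Q S u v * jac22 A M Q S u v - jac12 A M Q S u v * jac21 A M Q S u v.

Definition jac_trace (A M Q S u v : R) : R :=
  jac11 A M Q S u v + jac22 A M Q S u v.

Lemma char2_real_roots_mul (a b c d l1 l2 : R) :
  (a - l1) * (d - l1) - b * c = 0 -> (a - l2) * (d - l2) - b * c = 0 ->
  l1 <> l2 -> l1 * l2 = a * d - b * c.
Proof.
  intros E1 E2 Hne.
  assert (Hsum : (l1 - l2) * (l1 + l2 - (a + d)) = 0) by nra.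
  apply Rmult_integral in Hsum as [Hsum | Hsum]; nra.
Qed.

Lemma char2_root_Re_le_half_trace (a b c d : R) : exists z : C,
  Cminus (Cmult (Cminus (RtoC a) z) (Cminus (RtoC d) z)) (Cmult (RtoC b) (RtoC c))
    = RtoC 0 /\ Re z <= (a + d) / 2.
Proof.
  set (disc := (a - d) ^ 2 + 4 * b * c).
  destruct (Rle_dec 0 disc) as [Hdisc | Hdisc].
  - exists ((a + d - sqrt disc) / 2, 0). split.
    + pose proof (sqrt_sqrt _ Hdisc).
      unfold Cminus, Cmult, RtoC, Cplus, Copp; simpl. f_equal; unfold disc in *; nra.
    + pose proof (sqrt_pos disc). simpl. lra.
  - assert (Hdisc' : 0 <= - disc / 4) by lra.
    exists ((a + d) / 2, sqrt (- disc / 4)). split.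
    + pose proof (sqrt_sqrt _ Hdisc').
      unfold Cminus, Cmult, RtoC, Cplus, Copp; simpl. f_equal; unfold disc in *; nra.
    + simpl. lra.
Qed.

Lemma jac_eigenvalue_real (A M Q S u v l : R) :
  jac_eigenvalue A M Q S u v (RtoC l) ->
  (jac11 A M Q S u v - l) * (jac22 A M Q S u v - l)
    - jac12 A M Q S u v * jac21 A M Q S u v = 0.
Proof.
  unfold jac_eigenvalue. intro H. apply (f_equal fst) in H.
  unfold Cminus, Cmult, RtoC, Cplus, Copp in H; simpl in H. lra.
Qed.

Lemma saddle_jac_det_neg (A M Q S u v : R) :
  is_saddle A M Q S u v -> jac_det A M Q S u v < 0.
Proof.
  intros [_ [l1 [l2 [[Hl1 Hl2] [E1 E2]]]]].
  apply jac_eigenvalue_real in E1, E2.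
  unfold jac_det. rewrite <- (char2_real_roots_mul _ _ _ _ l1 l2 E1 E2) by lra.
  nra.
Qed.

Lemma repeller_jac_trace_pos (A M Q S u v : R) :
  is_repeller A M Q S u v -> 0 < jac_trace A M Q S u v.
Proof.
  intros [_ Hrep].
  destruct (char2_root_Re_le_half_trace (jac11 A M Q S u v) (jac12 A M Q S u v)
              (jac21 A M Q S u v) (jac22 A M Q S u v)) as [z [Hz Hre]].
  specialize (Hrep z Hz). unfold jac_trace. lra.
Qed.

Lemma jac11_eq A M Q S u v : jac11 A M Q S u v =
  2 * u * ((u + A) * (1 - u) * (u - M) - Q * v)
  + u ^ 2 * ((1 - u) * (u - M) - (u + A) * (u - M) + (u + A) * (1 - u)).
Proof. unfold jac11, field_u. apply is_derive_unique. auto_derive; [trivial | ring]. Qed.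

Lemma jac12_eq A M Q S u v : jac12 A M Q S u v = - Q * u ^ 2.
Proof. unfold jac12, field_u. apply is_derive_unique. auto_derive; [trivial | ring]. Qed.

Lemma jac21_eq A M Q S u v : jac21 A M Q S u v = S * (u - v) * v + S * (u + A) * v.
Proof. unfold jac21, field_v. apply is_derive_unique. auto_derive; [trivial | ring]. Qed.

Lemma jac22_eq A M Q S u v : jac22 A M Q S u v = S * (u + A) * (u - 2 * v).
Proof. unfold jac22, field_v. apply is_derive_unique. auto_derive; [trivial | ring]. Qed.

Lemma equilibrium_diag_balance (A M Q S u : R) :
  0 < u -> equilibrium A M Q S u u -> (u + A) * (1 - u) * (u - M) = Q * u.
Proof.
  intros hu [Hfu _]. unfold field_u in Hfu.
  apply Rmult_integral in Hfu as [H | H]; [| lra].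
  assert (0 < u ^ 2) by (apply pow_lt; lra). lra.
Qed.

Lemma jac_det_diag (A M Q S u : R) :
  0 < u -> equilibrium A M Q S u u ->
  jac_det A M Q S u u = S * u ^ 2 * (u + A) * (2 * u ^ 3 - (1 - A + M) * u ^ 2 - A * M).
Proof.
  intros hu Heq.
  assert (E : jac_det A M Q S u u =
    S * u ^ 2 * (u + A) * (2 * u ^ 3 - (1 - A + M) * u ^ 2 - A * M)
    - 3 * S * (u + A) * u ^ 2 * ((u + A) * (1 - u) * (u - M) - Q * u)).
  { unfold jac_det. rewrite jac11_eq, jac12_eq, jac21_eq, jac22_eq. ring. }
  rewrite E, (equilibrium_diag_balance A M Q S u hu Heq). ring.
Qed.

Lemma jac_trace_diag (A M Q S u : R) :
  0 < u -> equilibrium A M Q S u u ->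
  jac_trace A M Q S u u =
    u ^ 2 * (-3 * u ^ 2 + 2 * (1 - A + M) * u + (A - M + A * M)) - S * (u + A) * u.
Proof.
  intros hu Heq.
  assert (E : jac_trace A M Q S u u =
    u ^ 2 * (-3 * u ^ 2 + 2 * (1 - A + M) * u + (A - M + A * M)) - S * (u + A) * u
    + 2 * u * ((u + A) * (1 - u) * (u - M) - Q * u)).
  { unfold jac_trace. rewrite jac11_eq, jac22_eq. ring. }
  rewrite E, (equilibrium_diag_balance A M Q S u hu Heq). ring.
Qed.

(* The minimum of 2u^3 - T u^2 over u >= 0 is -T^3/27, attained at u = T/3. *)
Lemma cubic_pos (T c u : R) :
  0 < u -> 0 < c -> T ^ 3 < 27 * c -> 0 < 2 * u ^ 3 - T * u ^ 2 + c.
Proof.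
  intros hu hc HT.
  destruct (Rle_lt_dec T 0) as [HT0 | HT0].
  - assert (0 < u ^ 3) by (apply pow_lt; lra).
    assert (0 < u ^ 2) by (apply pow_lt; lra).
    nra.
  - assert (0 <= (3 * u - T) ^ 2 * (6 * u + T))
      by (apply Rmult_le_pos; [apply pow2_ge_0 | lra]).
    assert (27 * (2 * u ^ 3 - T * u ^ 2) = (3 * u - T) ^ 2 * (6 * u + T) - T ^ 3)
      by ring.
    lra.
Qed.

Lemma quadratic_neg (T B u : R) :
  0 < B -> T + sqrt (T ^ 2 + 3 * B) < u -> -3 * u ^ 2 + 2 * T * u + B < 0.
Proof.
  intros hB Hu.
  assert (Hr0 : 0 <= T ^ 2 + 3 * B) by nra.
  pose proof (sqrt_sqrt _ Hr0) as Hr.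
  pose proof (sqrt_pos (T ^ 2 + 3 * B)) as Hrp.
  set (r := sqrt (T ^ 2 + 3 * B)) in *.
  assert (HTr : 0 < T + r) by nra.
  assert (0 < (3 * u - T - r) * (3 * u - T + r)) by (apply Rmult_lt_0_compat; lra).
  nra.
Qed.

Theorem corollary1 (A M Q S : R)
  (hA : 0 < A < 1) (hM : M < 0) (hQ : 0 < Q) (hS : 0 < S) :
  let T := 1 - A + M in
  (T ^ 3 < - 27 * A * M ->
     forall ut : R, 0 < ut -> equilibrium A M Q S ut ut ->
       ~ is_saddle A M Q S ut ut) /\
  (forall ut : R, 0 < ut -> equilibrium A M Q S ut ut ->
     T + sqrt (T ^ 2 + 3 * (A - M + A * M)) < ut ->
     ~ is_repeller A M Q S ut ut).
Proof.
  intros T. split.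
  - intros HT ut hu Heq Hsaddle.
    pose proof (saddle_jac_det_neg _ _ _ _ _ _ Hsaddle) as Hdet.
    rewrite jac_det_diag in Hdet by assumption.
    assert (Hcubic : 0 < 2 * ut ^ 3 - T * ut ^ 2 + - (A * M))
      by (apply cubic_pos; nra).
    assert (0 < S * ut ^ 2 * (ut + A))
      by (assert (0 < ut ^ 2) by (apply pow_lt; lra); apply Rmult_lt_0_compat; nra).
    unfold T in Hcubic. nra.
  - intros ut hu Heq Hut Hrep.
    pose proof (repeller_jac_trace_pos _ _ _ _ _ _ Hrep) as Htr.
    rewrite jac_trace_diag in Htr by assumption.
    assert (Hquad : -3 * ut ^ 2 + 2 * T * ut + (A - M + A * M) < 0)
      by (apply quadratic_neg; [nra | exact Hut]).
    assert (0 < ut ^ 2) by (apply pow_lt; lra).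
    assert (0 < S * (ut + A) * ut) by (apply Rmult_lt_0_compat; nra).
    unfold T in Hquad. nra.
Qed.
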